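(* For every $n\ge 3$ and every $\eta>0$ there exist a $1$-dimensional Euclidean graph $G$ on $n$ vertices and a range assignment $r$ such that $SDG(G,r)$ is connected and the weight-coefficient of $SDG(G,r)$ with respect to $G$ is at least $n-2-\eta$. Concretely, take points $s,u_1,\dots,u_{n-2},t$ on the real line at coordinates $0,1,1+\epsilon,\dots,1+(n-3)\epsilon, W+1$, let $G$ have edge set $\{(s,u_i)\}\cup\{(u_i,t)\}$ for $i\in[n-2]$ with Euclidean edge weights, and let $r(s)=1$, $r(x)=W$ for all other vertices $x$; for $W$ sufficiently large relative to $n$ and $\epsilon$ sufficiently small relative to $1/n$, this works. Thus the weight-coefficient of connected SDGs of $1$-dimensional Euclidean $n$-vertex graphs can be $\Omega(n)$.
   Context: A $1$-dimensional Euclidean graph is a weighted graph whose vertices are points on a line and whose edges (not necessarily all pairs) have weight equal to the Euclidean distance between their endpoints. For a weighted graph $G=(V,E,w)$ and $r:V\to\mathbb{R}^+$, $SDG(G,r)$ is the spanning subgraph of $G$ containing edge $e=(u,v)\in E$ iff $r(u)\ge w(e)$ and $r(v)\ge w(e)$. The weight-coefficient of a connected spanning subgraph $G'$ of $G$ with respect to $G$ is $w(MST(G'))/w(MST(G))$. *)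

From HB Require Import structures.
From mathcomp Require Import all_boot all_order all_algebra.
Set Implicit Arguments. Unset Strict Implicit. Unset Printing Implicit Defensive.
Import Order.TTheory GRing.Theory Num.Theory.
Local Open Scope ring_scope.

Definition ewt (R : realFieldType) (n : nat) (p : 'I_n -> R) (u v : 'I_n) : R :=
  `|p u - p v|.

Definition simple_graph (n : nat) (E : rel 'I_n) : Prop :=
  (forall u v, E u v = E v u) /\ (forall u, ~~ E u u).

Definition euclid1_graph (R : realFieldType) (n : nat)
  (p : 'I_n -> R) (E : rel 'I_n) : Prop :=
  injective p /\ simple_graph E.

Definition connected_graph (n : nat) (E : rel 'I_n) : Prop :=
  forall u v, connect E u v.

Definition sdg (R : realFieldType) (n : nat) (p : 'I_n -> R) (E : rel 'I_n)
  (r : 'I_n -> R) : rel 'I_n :=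
  fun u v => [&& E u v, ewt p u v <= r u & ewt p u v <= r v].

(* A spanning tree of the graph (vertices 'I_n, edges E): a set T of edges
   (each stored once as (i,j) with i < j), all belonging to E, connecting all
   vertices, with exactly n - 1 edges. *)
Definition tree_rel (n : nat) (T : {set 'I_n * 'I_n}) : rel 'I_n :=
  fun a b => ((a, b) \in T) || ((b, a) \in T).

Definition spanning_tree (n : nat) (E : rel 'I_n) (T : {set 'I_n * 'I_n}) : Prop :=
  (forall e, e \in T -> ((e.1 < e.2)%N && E e.1 e.2)) /\
  connected_graph (tree_rel T) /\
  #|T| = n.-1.

Definition tree_weight (R : realFieldType) (n : nat) (p : 'I_n -> R)
  (T : {set 'I_n * 'I_n}) : R :=
  \sum_(e in T) ewt p e.1 e.2.

Definition mst_weight (R : realFieldType) (n : nat) (p : 'I_n -> R)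
  (E : rel 'I_n) (m : R) : Prop :=
  (exists T, spanning_tree E T /\ tree_weight p T = m) /\
  (forall T, spanning_tree E T -> m <= tree_weight p T).

From HB Require Import structures.
From mathcomp Require Import all_boot all_order all_algebra.
From mathcomp Require Import lra.
Set Implicit Arguments. Unset Strict Implicit. Unset Printing Implicit Defensive.
Import Order.TTheory GRing.Theory Num.Theory.
Local Open Scope ring_scope.

(* Put s at 0, the N = n - 2 inner vertices u_i at i (the paper's 1 + (i-1)eps
   up to scaling) and t at N + X, and join s and t to every u_i.  A spanning
   tree has N + 1 edges; the edges s-u_i cost at most N <= X and the edges
   u_i-t at least X, so an exchange argument shows that the star at s plus the
   edge u_N-t is a minimum spanning tree, of weight at most N^2 + X.  With
   r(s) = 1 the SDG keeps only s-u_1 and the N edges u_i-t, which therefore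
   form its only spanning tree, of weight at least N X.  Taking
   X >= N^3 / eta gives N X / (N^2 + X) >= N - eta. *)

Lemma tree_rel_sym n (T : {set 'I_n * 'I_n}) : symmetric (tree_rel T).
Proof. by move=> a b; rewrite /tree_rel orbC. Qed.

Lemma sdg_sym (R : realFieldType) n (p : 'I_n -> R) (E : rel 'I_n) (r : 'I_n -> R) :
  symmetric E -> symmetric (sdg p E r).
Proof. by move=> symE a b; rewrite /sdg symE /ewt distrC andbA [in RHS]andbA andbAC. Qed.

Lemma connected_graph_hub n (e : rel 'I_n) (h : 'I_n) :
  symmetric e -> (forall v, connect e v h) -> connected_graph e.
Proof.
move=> sym_e conn_h u v; apply: connect_trans (conn_h u) _.
by rewrite (sym_connect_sym sym_e) conn_h.
Qed.

Lemma spanning_tree_connected n (E : rel 'I_n) (T : {set 'I_n * 'I_n}) :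
  symmetric E -> spanning_tree E T -> connected_graph E.
Proof.
move=> symE [edgeT [connT _]] u v; apply: connect_sub (connT u v) => a b.
by case/orP=> /edgeT /andP[_ Eab] /=; apply: connect1; rewrite // symE.
Qed.

Lemma spanning_tree_eq n (E : rel 'I_n) (T T0 : {set 'I_n * 'I_n}) :
  spanning_tree E T0 -> (forall a b : 'I_n, (a < b)%N -> E a b -> (a, b) \in T0) ->
  spanning_tree E T -> T = T0.
Proof.
move=> [_ [_ cardT0]] onlyT0 [edgeT [_ cardT]]; apply/eqP.
rewrite eqEcard cardT cardT0 leqnn andbT; apply/subsetP => e /edgeT /andP[].
by rewrite [e]surjective_pairing; apply: onlyT0.
Qed.

Lemma sum_le_threshold (R : realFieldType) (I : finType) (w : I -> R) (K : R)
    (A B : {set I}) :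
  #|A| = #|B| -> (forall e, e \in B -> w e <= K) ->
  (forall e, e \in A -> e \notin B -> K <= w e) ->
  \sum_(e in B) w e <= \sum_(e in A) w e.
Proof.
move=> cardAB leBK geAK.
suff : \sum_(e in B) (w e - K) <= \sum_(e in A) (w e - K).
  by rewrite !sumrB !sumr_const cardAB lerD2r.
rewrite (big_setID A) [in leRHS](big_setID B) setIC /=.
apply: lerD; first exact: lexx.
apply: le_trans (_ : 0 <= _).
  by apply: sumr_le0 => e /setDP[/leBK]; rewrite subr_le0.
by apply: sumr_ge0 => e /setDP[eA eB]; rewrite subr_ge0 geAK.
Qed.

Section StarGraph.
Variable k : nat.

Definition src : 'I_k.+3 := ord0.
Definition snk : 'I_k.+3 := ord_max.
Definition inner : {set 'I_k.+3} := [set i : 'I_k.+3 | (0 < i < k.+2)%N].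
Definition first_inner : 'I_k.+3 := inord 1.
Definition last_inner : 'I_k.+3 := inord k.+1.

Definition star_graph : rel 'I_k.+3 := fun a b => (a \in inner) (+) (b \in inner).

Definition src_star : {set 'I_k.+3 * 'I_k.+3} := [set (src, u) | u in inner].
Definition snk_star : {set 'I_k.+3 * 'I_k.+3} := [set (u, snk) | u in inner].
Definition mst_G : {set 'I_k.+3 * 'I_k.+3} := (last_inner, snk) |: src_star.
Definition mst_SDG : {set 'I_k.+3 * 'I_k.+3} := (src, first_inner) |: snk_star.

Lemma inner_neq (i : 'I_k.+3) : (i \in inner) = (i != src) && (i != snk).
Proof.
rewrite inE -!val_eqE /= lt0n; congr (_ && _).
by rewrite ltn_neqAle -ltnS ltn_ord andbT.
Qed.

Lemma inner_neq_snk (u : 'I_k.+3) : u \in inner -> u != snk.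
Proof. by rewrite inner_neq => /andP[]. Qed.

Lemma src_inner : (src \in inner) = false.
Proof. by rewrite inner_neq eqxx. Qed.

Lemma snk_inner : (snk \in inner) = false.
Proof. by rewrite inner_neq eqxx andbF. Qed.

Lemma card_inner : #|inner| = k.+1.
Proof.
have -> : inner = ~: [set src; snk].
  by apply/setP => i; rewrite inner_neq !inE negb_or.
by have := cardsC [set src; snk]; rewrite cards2 card_ord => -[].
Qed.

Lemma first_innerE : first_inner = 1%N :> nat.
Proof. by rewrite inordK. Qed.

Lemma last_innerE : last_inner = k.+1 :> nat.
Proof. by rewrite inordK. Qed.

Lemma first_inner_in : first_inner \in inner.
Proof. by rewrite inE first_innerE. Qed.

Lemma last_inner_in : last_inner \in inner.
Proof. by rewrite inE last_innerE ltnSn. Qed.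

Lemma star_graph_sym : symmetric star_graph.
Proof. by move=> a b; rewrite /star_graph addbC. Qed.

Lemma star_graph_irr (a : 'I_k.+3) : ~~ star_graph a a.
Proof. by rewrite /star_graph addbb. Qed.

Lemma mem_src_star u : ((src, u) \in src_star) = (u \in inner).
Proof.
by apply/imsetP/idP => [[v vin [->]] | uin]; last exists u.
Qed.

Lemma mem_snk_star u : ((u, snk) \in snk_star) = (u \in inner).
Proof.
by apply/imsetP/idP => [[v vin [->]] | uin]; last exists u.
Qed.

Lemma star_graph_edge (a b : 'I_k.+3) :
  (a < b)%N -> star_graph a b -> (a, b) \in src_star :|: snk_star.
Proof.
move=> ltab; rewrite /star_graph !inner_neq in_setU.
have a_snk : a != snk by rewrite -val_eqE neq_ltn (leq_trans ltab) // -ltnS.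
have b_src : b != src by rewrite -val_eqE /= -lt0n (leq_ltn_trans _ ltab).
rewrite a_snk b_src /= andbT.
have [-> | a_src] := eqVneq a src.
  by move=> /= b_snk; rewrite mem_src_star inner_neq b_src b_snk.
by move=> /negPn /eqP ->; rewrite mem_snk_star inner_neq a_snk a_src orbT.
Qed.

Lemma last_snk_notin_src_star : (last_inner, snk) \notin src_star.
Proof.
apply/imsetP=> -[u _ [last_src _]].
by move: last_inner_in; rewrite inner_neq last_src eqxx.
Qed.

Lemma src_first_notin_snk_star : (src, first_inner) \notin snk_star.
Proof.
apply/imsetP=> -[u _ [_ first_snk]].
by move: first_inner_in; rewrite inner_neq first_snk eqxx andbF.
Qed.

Lemma card_mst_G : #|mst_G| = k.+2.
Proof.
by rewrite cardsU1 last_snk_notin_src_star card_imset ?card_inner // => u v [].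
Qed.

Lemma card_mst_SDG : #|mst_SDG| = k.+2.
Proof.
by rewrite cardsU1 src_first_notin_snk_star card_imset ?card_inner // => u v [].
Qed.

Lemma connected_mst_G : connected_graph (tree_rel mst_G).
Proof.
have src_edge u : u \in inner -> tree_rel mst_G u src.
  by move=> uin; apply/orP; right; apply/setU1r; rewrite mem_src_star.
apply: (connected_graph_hub (tree_rel_sym _) (h := src)) => v.
have [-> | v_src] := eqVneq v src; first exact: connect0.
have [-> | v_snk] := eqVneq v snk; last by rewrite connect1 // src_edge // inner_neq v_src.
apply: connect_trans (connect1 _) (connect1 (src_edge _ last_inner_in)).
by rewrite /tree_rel setU11 orbT.
Qed.

Lemma connected_mst_SDG : connected_graph (tree_rel mst_SDG).
Proof.
have snk_edge u : u \in inner -> tree_rel mst_SDG u snk.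
  by move=> uin; apply/orP; left; apply/setU1r; rewrite mem_snk_star.
apply: (connected_graph_hub (tree_rel_sym _) (h := snk)) => v.
have [-> | v_snk] := eqVneq v snk; first exact: connect0.
have [-> | v_src] := eqVneq v src; last by rewrite connect1 // snk_edge // inner_neq v_src.
apply: connect_trans (connect1 _) (connect1 (snk_edge _ first_inner_in)).
by rewrite /tree_rel setU11.
Qed.

Lemma mst_G_spanning : spanning_tree star_graph mst_G.
Proof.
split; last by split; [exact: connected_mst_G | rewrite card_mst_G].
move=> e /setU1P[-> | /imsetP[u uin ->]] /=.
  by rewrite last_innerE ltnSn /star_graph last_inner_in snk_inner.
by rewrite /star_graph src_inner uin andbT; move: uin; rewrite inE => /andP[].
Qed.
End StarGraph.

Section Weights.
Variables (R : realFieldType) (k : nat) (X : R).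
Hypothesis leNX : k.+1%:R <= X.

Local Notation N := (k.+1%:R : R).
Local Notation G := (@star_graph k).

Definition pos (i : 'I_k.+3) : R := if i == snk k then N + X else i%:R.
Definition range (i : 'I_k.+3) : R := if i == src k then 1 else N + X.

Local Notation SDG := (sdg pos G range).

Lemma le_N (i : 'I_k.+3) : i != snk k -> i%:R <= N.
Proof.
by rewrite -val_eqE ler_nat -ltnS => /= i_snk; rewrite ltn_neqAle i_snk -ltnS ltn_ord.
Qed.

Lemma X_gt0 : 0 < X.
Proof. exact: lt_le_trans (ltr0Sn _ _) leNX. Qed.

Lemma lt_snk_pos (i : 'I_k.+3) : i != snk k -> i%:R < N + X.
Proof. by move/le_N=> le_iN; rewrite (le_lt_trans le_iN) // ltrDl X_gt0. Qed.

Lemma ewt_src (u : 'I_k.+3) : u != snk k -> ewt pos (src k) u = u%:R.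
Proof. by move=> u_snk; rewrite /ewt /pos (negbTE u_snk) sub0r normrN normr_nat. Qed.

Lemma ewt_snk (u : 'I_k.+3) : u != snk k -> ewt pos u (snk k) = N + X - u%:R.
Proof.
move=> u_snk; rewrite /ewt /pos eqxx (negbTE u_snk) distrC ger0_norm // subr_ge0.
exact/ltW/lt_snk_pos.
Qed.

Lemma pos_inj : injective pos.
Proof.
move=> i j; rewrite /pos.
have [-> | i_snk] := eqVneq i (snk k); have [-> | j_snk] := eqVneq j (snk k) => //.
- by move=> top_j; have := lt_snk_pos j_snk; rewrite -top_j ltxx.
- by move=> i_top; have := lt_snk_pos i_snk; rewrite i_top ltxx.
- by move/eqP; rewrite eqr_nat => /eqP; apply: val_inj.
Qed.

Lemma range_gt0 (v : 'I_k.+3) : 0 < range v.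
Proof. by rewrite /range; case: ifP => _; rewrite ?ltr01 ?ltr_wpDl ?X_gt0. Qed.

Lemma sdg_edge (a b : 'I_k.+3) : (a < b)%N -> SDG a b -> (a, b) \in mst_SDG k.
Proof.
move=> ltab /and3P[Gab le_ra _]; move: le_ra.
case/setUP: (star_graph_edge ltab Gab) => /imsetP[u uin [-> ->]] => [|_]; last first.
  by rewrite setU1r // mem_snk_star.
rewrite ewt_src ?inner_neq_snk // /range eqxx (ler_nat R u 1) => u_le1.
suff -> : u = first_inner k by rewrite setU11.
move: uin; rewrite inE => /andP[u_gt0 _].
by apply: val_inj; rewrite /= first_innerE; apply/eqP; rewrite eqn_leq u_le1.
Qed.

Lemma mst_SDG_spanning : spanning_tree SDG (mst_SDG k).
Proof.
split; last by split; [exact: connected_mst_SDG | rewrite card_mst_SDG].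
have first_snk := inner_neq_snk (first_inner_in k).
move=> e /setU1P[-> | /imsetP[u uin ->]] /=.
  have first_src : first_inner k != src k.
    by move: (first_inner_in k); rewrite inner_neq => /andP[].
  rewrite /sdg /star_graph src_inner first_inner_in ewt_src // /range eqxx.
  by rewrite (negbTE first_src) (ltW (lt_snk_pos first_snk)) lern1 first_innerE.
move: (uin); rewrite inE => /andP[_ ->] /=.
rewrite /sdg /star_graph uin snk_inner ewt_snk ?inner_neq_snk // /range.
by move: uin; rewrite inner_neq => /andP[/negbTE-> _] /=; rewrite gerBl ler0n.
Qed.

Lemma ewt_last_snk : ewt pos (last_inner k) (snk k) = X.
Proof. by rewrite ewt_snk ?inner_neq_snk ?last_inner_in // last_innerE addrC addKr. Qed.

Lemma mst_G_min (T : {set 'I_k.+3 * 'I_k.+3}) :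
  spanning_tree G T -> tree_weight pos (mst_G k) <= tree_weight pos T.
Proof.
move=> [edgeT [_ cardT]]; apply: (sum_le_threshold (K := X)).
- by rewrite cardT card_mst_G.
- move=> e /setU1P[-> | /imsetP[u uin ->]] /=.
    by rewrite ewt_last_snk.
  by rewrite ewt_src ?inner_neq_snk // (le_trans (le_N _)) ?inner_neq_snk.
- move=> [a b] /edgeT /andP[ltab Gab].
  case/setUP: (star_graph_edge ltab Gab) => /imsetP[u uin [-> ->]].
    by rewrite in_setU1 mem_src_star uin orbT.
  move=> _ /=; rewrite ewt_snk ?inner_neq_snk // -addrA addrCA lerDl subr_ge0.
  by rewrite le_N ?inner_neq_snk.
Qed.

Lemma tree_weight_mst_G : X <= tree_weight pos (mst_G k) <= N * N + X.
Proof.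
rewrite /tree_weight big_setU1 ?last_snk_notin_src_star //= big_imset => [|u v _ _ [] //].
rewrite ewt_last_snk lerDl sumr_ge0 => [|u _]; last exact: normr_ge0.
rewrite addrC lerD2r mulr_natr -[n in _ *+ n](card_inner k) -sumr_const.
by apply: ler_sum => u uin /=; rewrite ewt_src ?le_N ?inner_neq_snk.
Qed.

Lemma tree_weight_mst_SDG : N * X <= tree_weight pos (mst_SDG k).
Proof.
rewrite /tree_weight big_setU1 ?src_first_notin_snk_star //= big_imset => [|u v _ _ [] //].
rewrite mulr_natl -[n in _ *+ n](card_inner k) -sumr_const.
rewrite -[leLHS]add0r; apply: lerD; first exact: normr_ge0.
apply: ler_sum => u uin; rewrite ewt_snk ?inner_neq_snk // -addrA addrCA lerDl.
by rewrite subr_ge0 le_N ?inner_neq_snk.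
Qed.
End Weights.

Lemma ratio_lower_bound (R : realFieldType) (N X eta m m' : R) :
  0 < eta -> 0 <= N -> N ^+ 3 <= eta * X -> 0 < m -> m <= N * N + X ->
  N * X <= m' -> N - eta <= m' / m.
Proof.
move=> eta_gt0 N_ge0 le_N3 m_gt0 le_m le_m'; rewrite ler_pdivlMr //.
apply: le_trans le_m'; nra.
Qed.

Theorem mainTheorem7 (R : realFieldType) (n : nat) (eta : R) :
  (3 <= n)%N -> 0 < eta ->
  exists (p : 'I_n -> R) (E : rel 'I_n) (r : 'I_n -> R),
    [/\ euclid1_graph p E,
        (forall v, 0 < r v),
        connected_graph (sdg p E r) &
        exists m m' : R,
          [/\ mst_weight p E m,
              mst_weight p (sdg p E r) m' &
              n%:R - 2 - eta <= m' / m]].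
Proof.
case: n => [|[|[|k]]] // _ eta_gt0.
pose N : R := k.+1%:R; pose X := N ^+ 3 / eta + N.
have leNX : N <= X by rewrite lerDr divr_ge0 ?exprn_ge0 ?ltW.
have le_N3 : N ^+ 3 <= eta * X.
  by rewrite mulrDr mulrCA divff ?gt_eqF // mulr1 lerDl mulr_ge0 ?ltW.
have sdg_tree := mst_SDG_spanning leNX.
exists (pos X), (@star_graph k), (range X); split.
- by split; [exact: pos_inj | split; [exact: star_graph_sym | exact: star_graph_irr]].
- exact: range_gt0.
- exact: spanning_tree_connected (sdg_sym _ _ (@star_graph_sym k)) sdg_tree.
exists (tree_weight (pos X) (mst_G k)), (tree_weight (pos X) (mst_SDG k)); split.
- by split; [exists (mst_G k); split; first exact: mst_G_spanning | exact: mst_G_min].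
- split; first by exists (mst_SDG k).
  by move=> T /(spanning_tree_eq sdg_tree (@sdg_edge R k X)) ->.
have /andP[le_X_m le_m] := tree_weight_mst_G leNX.
have -> : k.+3%:R - 2 = N by rewrite -[k.+3]addn2 natrD addrK.
apply: ratio_lower_bound (tree_weight_mst_SDG leNX) => //.
exact: lt_le_trans (X_gt0 leNX) le_X_m.
Qed.
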